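(* Let $m\ge 2$ and let $n$ satisfy $2^m\le n<2^m+2^{m-1}-1$. Put $e=n-2^m+1$. Then every $f\in\mathbf{SB}_n$ satisfies $\mathcal{AI}(f)\le 2^{m-1}-1$ or $\deg(\sigma_e f)=2^{m-1}+e$.
   Context: $\mathbf{SB}_n$ is the set of symmetric Boolean functions on $n$ variables; $\sigma_e$ is the $e$-th elementary symmetric function of $x_1,\dots,x_n$ over $\mathbb{F}_2$; $\deg$ is the algebraic degree. The algebraic immunity of $f$ is $\mathcal{AI}(f)=\min\{\deg(g): g\neq0,\ gf=0 \text{ or } g(f+1)=0\}$. *)

From mathcomp Require Import all_boot fingroup perm.
Set Implicit Arguments. Unset Strict Implicit. Unset Printing Implicit Defensive.

Definition point (n : nat) := {ffun 'I_n -> bool}.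
Definition BF (n : nat) := {ffun point n -> bool}.

Definition supp n (x : point n) : {set 'I_n} := [set i | x i].

(* Evaluation of the algebraic normal form  XOR_{S in A} x^S, where
   x^S = prod_{i in S} x_i = [S \subset supp x]. *)
Definition anf_eval n (A : {set {set 'I_n}}) (x : point n) : bool :=
  odd #|[set S in A | S \subset supp x]|.

(* Algebraic degree: the least degree of a multilinear (ANF) representation
   (the ANF is unique, so this is the degree of the ANF; deg 0 = 0). *)
Definition deg n (f : BF n) : nat :=
  \big[minn/n]_(A : {set {set 'I_n}} | [forall x, anf_eval A x == f x])
     \max_(S in A) #|S|.

Definition sigma n (e : nat) : BF n :=
  [ffun x => anf_eval [set S : {set 'I_n} | #|S| == e] x].

Definition bmul n (f g : BF n) : BF n := [ffun x => f x && g x].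
Definition bnot n (f : BF n) : BF n := [ffun x => ~~ f x].
Definition bzero n : BF n := [ffun _ => false].

Definition symmetricBF n (f : BF n) : Prop :=
  forall (s : {perm 'I_n}) (x : point n), f [ffun i => x (s i)] = f x.

(* Algebraic immunity. The defining set is always nonempty (g = f or g = f+1),
   so the default value n of the min is never used. *)
Definition AI n (f : BF n) : nat :=
  \big[minn/n]_(g : BF n | (g != bzero n) &&
        ((bmul g f == bzero n) || (bmul g (bnot f) == bzero n))) deg g.

From mathcomp Require Import all_boot fingroup perm zify.
Set Implicit Arguments. Unset Strict Implicit. Unset Printing Implicit Defensive.

(* Let h = 2^(m-1), so that 2^m = 2h, e = n - 2h + 1 and n = 2h + e - 1 with
   1 <= e < h.  A symmetric f is a function V of the Hamming weight.

   - If V r = V (r + h) for some e <= r < h, then the indicator g of the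
     weights congruent to r modulo h vanishes outside the weights r, r + h
     (r + 2h > n), on which f is constant; so g annihilates f or f + 1.
     By Lucas' theorem g has the ANF sum_{|S| < h, C(|S|,r) odd} x^S, of
     degree < h, hence AI(f) <= h - 1.
   - Otherwise V d <> V (h + d) for all e <= d < h.  The ANF coefficient of
     the symmetric function sigma_e f at a set of size w is
     sum_j C(w,j) C(j,e) V(j) mod 2.  By Lucas' theorem and the parity
     identity sum_j C(a,j) C(j,r) = [a = r] (mod 2) it equals [t = e] for
     w = h + t with e <= t < h, and 0 for w = 2h + t with t < e; hence the
     degree of sigma_e f is exactly h + e. *)

(* Pascal's rule applied twice. *)
Lemma binSS2 a k : 'C(a.+2, k.+2) = 'C(a, k.+2) + 2 * 'C(a, k.+1) + 'C(a, k).
Proof. by rewrite !binS mul2n -addnn !addnA. Qed.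

Lemma odd_bin_double a :
  (forall c, odd 'C(a.*2, c.*2) = odd 'C(a, c)) /\
  (forall c, odd 'C(a.*2, (c.*2).+1) = false).
Proof.
elim: a => [|a [IHE IHO]]; first by split=> c; rewrite ?bin0n //; case: c.
rewrite doubleS; split=> [[|c]|[|c]].
- by rewrite !bin0.
- by rewrite doubleS binSS2 !oddD IHO -doubleS !IHE addbF.
- by rewrite bin1 /= odd_double.
- rewrite doubleS -[(c.*2).+3]/((c.*2).+1).+2 binSS2 !oddD -doubleS !IHO.
  by case: (odd _ in X in _ (+) X).
Qed.

Lemma odd_bin_digit a b c d : b < 2 -> d < 2 ->
  odd 'C(a.*2 + b, c.*2 + d) = odd 'C(a, c) && odd 'C(b, d).
Proof.
have [even_even even_odd] := odd_bin_double a.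
case: b => [|[|//]] _; case: d => [|[|//]] _; rewrite ?addn0 ?addn1.
- by rewrite even_even bin0 andbT.
- by rewrite even_odd andbF.
- case: c => [|c]; first by rewrite !bin0.
  by rewrite doubleS binS oddD -doubleS even_even even_odd addbF andbT.
- by rewrite binS oddD even_even even_odd andbT.
Qed.

(* Lucas' theorem mod 2, splitting off the k lowest binary digits. *)
Lemma lucas_pow2 k a b c d : b < 2 ^ k -> d < 2 ^ k ->
  odd 'C(a * 2 ^ k + b, c * 2 ^ k + d) = odd 'C(a, c) && odd 'C(b, d).
Proof.
elim: k b d => [|k IH] b d.
  rewrite expn0 !muln1; case: b => // _; case: d => // _.
  by rewrite !addn0 !bin0 andbT.
rewrite expnS => hb hd.
have low_digit x y : x * (2 * 2 ^ k) + y = (x * 2 ^ k + y./2).*2 + odd y.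
  rewrite -{1}(odd_double_half y) doubleD -!muln2 -mulnA (mulnC 2).
  by rewrite (addnC (odd y)) addnA.
rewrite !low_digit odd_bin_digit ?ltnS ?leq_b1 // IH ?ltn_half_double -?mul2n //.
rewrite -{3}(odd_double_half b) -{3}(odd_double_half d) addnC (addnC (odd d)).
by rewrite odd_bin_digit ?ltnS ?leq_b1 // andbA.
Qed.

Lemma odd_bin_mod k w j : j < 2 ^ k -> odd 'C(w, j) = odd 'C(w %% 2 ^ k, j).
Proof.
move=> hj; rewrite {1}(divn_eq w (2 ^ k)) -[j]/(0 * 2 ^ k + j).
by rewrite lucas_pow2 ?ltn_pmod ?expn_gt0 // bin0.
Qed.

Lemma odd_bin_le a b : odd 'C(a, b) -> b <= a.
Proof. by rewrite leqNgt; apply: contraL => /bin_small ->. Qed.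

Definition bin_chain a r := \sum_(j < a.+1) 'C(a, j) * 'C(j, r).

(* Pascal's rule in the outer binomial. *)
Lemma bin_chainS a r :
  bin_chain a.+1 r = bin_chain a r + \sum_(j < a.+1) 'C(a, j) * 'C(j.+1, r).
Proof.
rewrite /bin_chain big_ord_recl /=.
under eq_bigr => j _ do rewrite /bump /= add1n binS mulnDl.
rewrite big_split /= addnA; congr (_ + _).
by rewrite big_ord_recr /= (bin_small (ltnSn a)) mul0n addn0 [in RHS]big_ord_recl !bin0.
Qed.

(* Binomial inversion mod 2: sum_j C(a,j) C(j,r) is odd iff a = r. *)
Lemma odd_bin_chain a r : odd (bin_chain a r) = (a == r).
Proof.
elim: a r => [|a IH] r; first by rewrite /bin_chain big_ord1 bin0 mul1n; case: r.
rewrite bin_chainS oddD; case: r => [|r].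
  under eq_bigr => j _ do rewrite !bin0 muln1.
  have -> : \sum_(j < a.+1) 'C(a, j) = 2 ^ a.
    by rewrite -[2]/(1 + 1) expnDn; apply: eq_bigr => j _; rewrite !exp1n !muln1.
  by rewrite IH oddX; case: a {IH}.
under eq_bigr => j _ do rewrite binS mulnDr.
by rewrite big_split oddD /= -/(bin_chain a r.+1) -/(bin_chain a r) !IH addbA addbb eqSS.
Qed.

Lemma odd_sum_xor (I : finType) (P : pred I) (F : I -> nat) :
  odd (\sum_(i | P i) F i) = \big[addb/false]_(i | P i) odd (F i).
Proof. exact: (big_morph odd oddD). Qed.

Lemma xor_card (I : finType) (P : pred I) (B : {set I}) :
  (forall i, P i = (i \in B)) -> \big[addb/false]_(i | P i) true = odd #|B|.
Proof.
move=> PB; rewrite -sum1_card odd_sum_xor.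
by apply: eq_bigl => i; rewrite PB.
Qed.

Lemma xor_const (I : finType) (P : pred I) (c : bool) :
  \big[addb/false]_(i | P i) c = c && \big[addb/false]_(i | P i) true.
Proof. by case: c => //=; rewrite big1. Qed.

Lemma xor_mkcond (I : finType) (P : pred I) (F : I -> bool) :
  \big[addb/false]_(i | P i) F i = \big[addb/false]_i (P i && F i).
Proof. by rewrite big_mkcond; apply: eq_bigr => i _; case: (P i). Qed.

Lemma xor_widen M N (T : nat -> bool) : M <= N ->
  (forall j, M <= j -> T j = false) ->
  \big[addb/false]_(j < M) T j = \big[addb/false]_(j < N) T j.
Proof.
move=> MN T0; rewrite (big_ord_widen N T MN) big_mkcond /=.
by apply: eq_bigr => j _; case: ltnP => // /T0 ->.
Qed.

Lemma xor_bin_chain a r N : a < N ->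
  \big[addb/false]_(j < N) (odd 'C(a, j) && odd 'C(j, r)) = (a == r).
Proof.
move=> aN; rewrite -odd_bin_chain /bin_chain odd_sum_xor.
under eq_bigr => j _ do rewrite oddM.
rewrite (@xor_widen a.+1 N (fun j => odd 'C(a, j) && odd 'C(j, r))) // => j aj.
by rewrite bin_small.
Qed.

Definition point_of n (U : {set 'I_n}) : point n := [ffun i => i \in U].

Lemma supp_point_of n (U : {set 'I_n}) : supp (point_of U) = U.
Proof. by apply/setP => i; rewrite inE ffunE. Qed.

Lemma point_of_supp n (x : point n) : point_of (supp x) = x.
Proof. by apply/ffunP => i; rewrite ffunE inE. Qed.

Lemma card_set_le n (S : {set 'I_n}) : #|S| <= n.
Proof. by rewrite -[n in _ <= n]card_ord max_card. Qed.

Lemma exists_set_of_card n w : w <= n -> exists U : {set 'I_n}, #|U| = w.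
Proof.
move=> wn; have : 0 < #|[set U : {set 'I_n} | #|U| == w]|.
  by rewrite card_draws card_ord bin_gt0.
by rewrite card_gt0 => /set0Pn [U]; rewrite inE => /eqP; exists U.
Qed.

Lemma card_interval (T : finType) (S X : {set T}) : S \subset X ->
  #|[set U : {set T} | S \subset U & U \subset X]| = 2 ^ #|X :\: S|.
Proof.
move=> SX; rewrite -card_powerset.
have -> : [set U : {set T} | S \subset U & U \subset X] =
          [set S :|: W | W in powerset (X :\: S)].
  apply/setP => U; rewrite inE; apply/andP/imsetP.
    move=> [SU UX]; exists (U :\: S); first by rewrite inE setSD.
    by rewrite setDE setUIr setUCr setIT; apply/esym/setUidPr.
  move=> [W]; rewrite inE => WXS ->; rewrite subsetUl /=.
  by rewrite subUset SX (subset_trans WXS) // subsetDl.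
apply: card_in_imset => W1 W2; rewrite !inE !subsetD => /andP[_ W1S] /andP[_ W2S] E.
have := congr1 (fun A => A :\: S) E.
by rewrite /= !setDUl setDv !set0U !(setDidPl _).
Qed.

Lemma odd_interval (T : finType) (S X : {set T}) : S \subset X ->
  odd #|[set U : {set T} | S \subset U & U \subset X]| = (S == X).
Proof.
move=> SX; rewrite card_interval // oddX orbF cards_eq0 setD_eq0.
by rewrite eqEsubset SX.
Qed.

Lemma xor_interval (T : finType) (S X : {set T}) : S \subset X ->
  \big[addb/false]_(U : {set T} | (U \subset X) && (S \subset U)) true = (S == X).
Proof.
move=> SX; rewrite (@xor_card _ _ [set U : {set T} | S \subset U & U \subset X]).
  exact: odd_interval.
by move=> U; rewrite inE andbC.
Qed.

Lemma anf_eval_xor n (A : {set {set 'I_n}}) x :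
  anf_eval A x = \big[addb/false]_(S : {set 'I_n} | S \subset supp x) (S \in A).
Proof.
rewrite /anf_eval -(@xor_card _ (fun S : {set 'I_n} => (S \in A) && (S \subset supp x))).
  by rewrite xor_mkcond [RHS]xor_mkcond; apply: eq_bigr => S _; rewrite andbT andbC.
by move=> S; rewrite inE.
Qed.

Lemma xor_subsets_by_card (T : finType) (S : {set T}) (G : nat -> bool) :
  \big[addb/false]_(U : {set T} | U \subset S) G #|U| =
  \big[addb/false]_(j < #|S|.+1) (odd 'C(#|S|, j) && G j).
Proof.
rewrite (partition_big (fun U : {set T} => inord #|U| : 'I_#|S|.+1) xpredT) //=.
apply: eq_bigr => j _.
have cardUS (U : {set T}) : U \subset S -> #|U| < #|S|.+1.
  by rewrite ltnS; exact: subset_leq_card.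
rewrite (eq_bigr (fun _ => G j)); last first.
  by move=> U /andP[US /eqP <-]; rewrite inordK ?cardUS.
rewrite xor_const andbC (@xor_card _ _ [set U : {set T} | U \subset S & #|U| == j]).
  by rewrite cards_draws.
move=> U; rewrite inE; case: (boolP (U \subset S)) => //= US.
by rewrite -val_eqE /= inordK ?cardUS.
Qed.

(* Moebius transform: the coefficient of x^S in the ANF of g. *)
Definition anf_coef n (g : BF n) (S : {set 'I_n}) : bool :=
  \big[addb/false]_(U : {set 'I_n} | U \subset S) g (point_of U).

Lemma anf_coef_card n (g : BF n) (G : nat -> bool) (S : {set 'I_n}) :
  (forall U, g (point_of U) = G #|U|) ->
  anf_coef g S = \big[addb/false]_(j < #|S|.+1) (odd 'C(#|S|, j) && G j).
Proof.
by move=> gG; rewrite /anf_coef -xor_subsets_by_card; apply: eq_bigr => U _.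
Qed.

Lemma anf_eval_card n (P : nat -> bool) (x : point n) :
  anf_eval [set S : {set 'I_n} | P #|S|] x =
  \big[addb/false]_(j < #|supp x|.+1) (odd 'C(#|supp x|, j) && P j).
Proof.
by rewrite anf_eval_xor -xor_subsets_by_card; apply: eq_bigr => S _; rewrite inE.
Qed.

Lemma anf_coefK n (g : BF n) x : anf_eval [set S | anf_coef g S] x = g x.
Proof.
rewrite anf_eval_xor.
under eq_bigr => S _ do rewrite inE.
rewrite /anf_coef (exchange_big_dep (fun U : {set 'I_n} => U \subset supp x)) /=;
  last by move=> S U SX US; apply: subset_trans US SX.
under eq_bigr => U UX do rewrite xor_const [X in _ && X]xor_interval //.
rewrite (bigD1 (supp x)) //= eqxx andbT point_of_supp big1 ?addbF //.
by move=> U /andP[_ /negbTE ->]; rewrite andbF.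
Qed.

Lemma bigmin_le (I : finType) (P : pred I) (F : I -> nat) d j :
  P j -> \big[minn/d]_(i | P i) F i <= F j.
Proof.
move=> Pj; elim: (index_enum I) (mem_index_enum j) => //= i r IH.
rewrite in_cons big_cons => /orP[/eqP <- | jr]; first by rewrite Pj geq_minl.
by case: (P i); rewrite ?geq_min IH ?orbT.
Qed.

Lemma deg_le_anf n (g : BF n) (A : {set {set 'I_n}}) :
  (forall x, anf_eval A x = g x) -> deg g <= \max_(S in A) #|S|.
Proof. by move=> Ag; apply: bigmin_le; apply/forallP => x; rewrite Ag. Qed.

Lemma anf_coef_unique n (g : BF n) (A : {set {set 'I_n}}) T :
  (forall x, anf_eval A x = g x) -> anf_coef g T = (T \in A).
Proof.
move=> Ag; rewrite /anf_coef.
under eq_bigr => U _ do rewrite -Ag anf_eval_xor supp_point_of.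
rewrite (exchange_big_dep (fun S : {set 'I_n} => S \subset T)) /=;
  last by move=> U S UT SU; apply: subset_trans SU UT.
under eq_bigr => S ST do rewrite xor_const xor_interval //.
rewrite (bigD1 T) //= eqxx andbT big1 ?addbF //.
by move=> S /andP[_ /negbTE ->]; rewrite andbF.
Qed.

Lemma deg_ub n (g : BF n) D :
  (forall S : {set 'I_n}, D < #|S| -> anf_coef g S = false) -> deg g <= D.
Proof.
move=> high0; apply: leq_trans (deg_le_anf (@anf_coefK n g)) _.
apply/bigmax_leqP => S; rewrite inE leqNgt.
by apply: contraL => /high0 ->.
Qed.

Lemma deg_lb n (g : BF n) T : anf_coef g T -> #|T| <= deg g.
Proof.
move=> gT; apply: (big_ind (fun k => #|T| <= k)).
- exact: card_set_le.
- by move=> a b Ta Tb; rewrite leq_min Ta Tb.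
move=> A /forallP Ag; apply: leq_bigmax_cond.
by rewrite -(@anf_coef_unique n g A) // => x; apply/eqP.
Qed.

Lemma perm_of_equal_card (T : finType) (A B : {set T}) : #|A| = #|B| ->
  exists s : {perm T}, forall i, (s i \in B) = (i \in A).
Proof.
move=> AB; suff : forall k (A B : {set T}), #|A| = k -> #|B| = k ->
    exists s : {perm T}, forall i, (s i \in B) = (i \in A) by apply.
clear A B AB; elim=> [|k IH] A B hA hB.
  move/eqP: hA; rewrite cards_eq0 => /eqP ->.
  move/eqP: hB; rewrite cards_eq0 => /eqP ->.
  by exists 1%g => i; rewrite !inE.
have /set0Pn [a aA] : A != set0 by rewrite -card_gt0 hA.
have /set0Pn [b bB] : B != set0 by rewrite -card_gt0 hB.
have hA' : #|A :\ a| = k by move: hA; rewrite (cardsD1 a) aA add1n => -[].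
have hB' : #|B :\ b| = k by move: hB; rewrite (cardsD1 b) bB add1n => -[].
have [s hs] := IH _ _ hA' hB'.
exists (s * tperm (s a) b)%g => i; rewrite permM.
have sa_notin : s a \notin B :\ b by rewrite hs !inE eqxx.
case: (eqVneq i a) => [->|ia]; first by rewrite tpermL aA.
have sia : s i != s a by apply: contraNneq ia => /perm_inj ->.
case: (eqVneq (s i) b) => [sib|sib].
  rewrite sib tpermR.
  have : s i \notin B :\ b by rewrite sib !inE eqxx.
  rewrite hs !inE ia /= => /negbTE ->.
  have sab : s a != b by rewrite -sib eq_sym.
  by move: sa_notin; rewrite !inE sab /= => /negbTE.
rewrite tpermD 1?eq_sym //.
by move: (hs i); rewrite !inE sib ia.
Qed.

Lemma symmetric_weight n (f : BF n) :
  symmetricBF f -> exists V : nat -> bool, forall x, f x = V #|supp x|.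
Proof.
move=> fsym.
have f_card x y : #|supp x| = #|supp y| -> f x = f y.
  move=> /perm_of_equal_card [s hs]; rewrite -(fsym s y); apply: f_equal.
  by apply/ffunP => i; rewrite ffunE; move: (hs i); rewrite !inE.
exists (fun w => if [pick U : {set 'I_n} | #|U| == w] is Some U
                 then f (point_of U) else false) => x.
case: pickP => [U /eqP hU | /(_ (supp x))]; last by rewrite eqxx.
by apply: f_card; rewrite supp_point_of.
Qed.

(* ANF of the indicator of the weights congruent to r mod 2^k (Lucas). *)
Lemma residue_anf k n r (x : point n) : r < 2 ^ k ->
  anf_eval [set S : {set 'I_n} | (#|S| < 2 ^ k) && odd 'C(#|S|, r)] x =
  (#|supp x| %% 2 ^ k == r).
Proof.
move=> rk; rewrite (anf_eval_card (fun j => (j < 2 ^ k) && odd 'C(j, r))).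
set w := #|supp x|; have wk : w %% 2 ^ k < 2 ^ k by rewrite ltn_pmod ?expn_gt0.
rewrite -(@xor_bin_chain (w %% 2 ^ k) r w.+1) ?ltnS ?leq_mod //.
apply: eq_bigr => j _; case: (ltnP j (2 ^ k)) => [jk | kj].
  by rewrite (odd_bin_mod w jk) andbA.
by rewrite andbF bin_small // (leq_trans wk kj).
Qed.

Lemma AI_le_annihilator n (f g : BF n) : g != bzero n ->
  (bmul g f == bzero n) || (bmul g (bnot f) == bzero n) -> AI f <= deg g.
Proof. by move=> gnz gann; apply: bigmin_le; rewrite gnz gann. Qed.

Lemma weight_of_residue h r w : w %% h = r -> w < r + h.*2 -> w = r \/ w = r + h.
Proof.
move=> wr wlt; have := divn_eq w h; rewrite wr.
case: (w %/ h) => [|[|q]] E; [left | right | exfalso]; lia.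
Qed.

(* First case: if f takes the same value at the weights r and r + 2^k, with
   r + 2^(k+1) > n, then the residue indicator is a low degree annihilator. *)
Lemma AI_le_of_equal_pair k n (f : BF n) (V : nat -> bool) r :
  (forall x, f x = V #|supp x|) -> r < 2 ^ k -> r <= n -> n < r + (2 ^ k).*2 ->
  V r = V (r + 2 ^ k) -> AI f <= 2 ^ k - 1.
Proof.
move=> fV rk rn nlt Vr.
pose g : BF n := [ffun x => #|supp x| %% 2 ^ k == r].
have g_deg : deg g <= 2 ^ k - 1.
  apply: leq_trans (deg_le_anf (A := [set S : {set 'I_n} |
                      (#|S| < 2 ^ k) && odd 'C(#|S|, r)]) _) _.
    by move=> x; rewrite residue_anf // ffunE.
  apply/bigmax_leqP => S; rewrite inE => /andP[Sk _]; lia.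
have g_nz : g != bzero n.
  have [U hU] := exists_set_of_card rn.
  apply/eqP => /ffunP /(_ (point_of U)); rewrite !ffunE supp_point_of hU.
  by rewrite modn_small ?eqxx.
have f_const x : #|supp x| %% 2 ^ k == r -> f x = V r.
  move=> /eqP /weight_of_residue; rewrite fV.
  case=> [|->|->] //; exact: leq_ltn_trans (card_set_le (supp x)) nlt.
apply: leq_trans (AI_le_annihilator g_nz _) g_deg.
apply/orP; case VrT : (V r); [right | left];
  apply/eqP/ffunP => x; rewrite !ffunE;
  by case: (boolP (_ %% _ == r)) => //= /f_const ->; rewrite VrT.
Qed.

Lemma sigma_card n e (x : point n) : sigma n e x = odd 'C(#|supp x|, e).
Proof.
rewrite ffunE /anf_eval -cards_draws; congr odd.
by apply: eq_card => S; rewrite !inE andbC.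
Qed.

Section CoefficientsOfSigmaProduct.

Variables (k e : nat) (V : nat -> bool).
Let h := 2 ^ k.
Hypothesis e_lt_h : e < h.

Let G j := odd 'C(j, e) && V j.

(* For w = h + t, Lucas pairs the terms j = d and j = h + d. *)
Lemma xor_upper_half t : t < h ->
  \big[addb/false]_(j < (h + t).+1) (odd 'C(h + t, j) && G j) =
  \big[addb/false]_(d < h) (odd 'C(t, d) && odd 'C(d, e) && (V d (+) V (h + d))).
Proof.
move=> th.
have binL d : d < h -> odd 'C(h + t, d) = odd 'C(t, d).
  by move=> dh; have := lucas_pow2 1 0 th dh; rewrite mul1n mul0n bin0.
have binR d : d < h -> odd 'C(h + t, h + d) = odd 'C(t, d).
  by move=> dh; have := lucas_pow2 1 1 th dh; rewrite mul1n binn.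
have binE d : d < h -> odd 'C(h + d, e) = odd 'C(d, e).
  by move=> dh; have := lucas_pow2 1 0 dh e_lt_h; rewrite mul1n mul0n bin0.
rewrite (@xor_widen _ (h + h) (fun j => odd 'C(h + t, j) && G j)); last 2 first.
- by rewrite ltn_add2l.
- by move=> j hj; rewrite bin_small.
rewrite big_split_ord /= -big_split /=; apply: eq_bigr => d _.
rewrite /G binL // binR // binE //.
by case: (odd 'C(t, d)); case: (odd 'C(d, e)); case: (V d); case: (V (h + d)).
Qed.

Lemma xor_coef_upper_half t :
  (forall d, e <= d < h -> V d != V (h + d)) -> e <= t < h ->
  \big[addb/false]_(j < (h + t).+1) (odd 'C(h + t, j) && G j) = (t == e).
Proof.
move=> Vflip /andP[et th]; rewrite xor_upper_half // -(@xor_bin_chain t e h) //.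
apply: eq_bigr => d _; case: (boolP (odd 'C(d, e))) => [de|]; last by rewrite !andbF.
have /Vflip : e <= d < h by rewrite (odd_bin_le de) ltn_ord.
by case: (V d); case: (V (h + d)); rewrite /= ?andbT.
Qed.

(* At weight 2h + t with t < e every term vanishes, by Lucas. *)
Lemma xor_coef_top t : t < e ->
  \big[addb/false]_(j < (h.*2 + t).+1) (odd 'C(h.*2 + t, j) && G j) = false.
Proof.
move=> te; apply: big1 => i _; rewrite /G; move: (nat_of_ord i) => j.
case: (boolP (odd 'C(j, e))) => [je|]; last by rewrite andbF.
rewrite (odd_bin_mod j e_lt_h) in je.
rewrite -mul2n {1}(divn_eq j h) lucas_pow2 ?ltn_pmod ?expn_gt0 //; last by lia.
case: (boolP (odd 'C(t, j %% h))) => [tj|]; last by rewrite andbF.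
by have := leq_trans (odd_bin_le je) (odd_bin_le tj); rewrite leqNgt te.
Qed.

End CoefficientsOfSigmaProduct.

Lemma deg_sigma_mul k n e (f : BF n) (V : nat -> bool) :
  (forall x, f x = V #|supp x|) -> e < 2 ^ k ->
  2 ^ k + e <= n -> n < (2 ^ k).*2 + e ->
  (forall d, e <= d < 2 ^ k -> V d != V (2 ^ k + d)) ->
  deg (bmul (sigma n e) f) = 2 ^ k + e.
Proof.
move=> fV ek low high Vflip.
have coefE S : anf_coef (bmul (sigma n e) f) S =
    \big[addb/false]_(j < #|S|.+1) (odd 'C(#|S|, j) && (odd 'C(j, e) && V j)).
  apply: (anf_coef_card (G := fun j => odd 'C(j, e) && V j)) => U;
  by rewrite ffunE sigma_card fV supp_point_of.
apply/anti_leq/andP; split.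
  apply: deg_ub => S hS; rewrite coefE.
  have Sn := card_set_le S.
  case: (ltnP #|S| (2 ^ k).*2) => S2.
    have -> : #|S| = 2 ^ k + (#|S| - 2 ^ k) by lia.
    by rewrite xor_coef_upper_half //; apply/eqP; lia.
  have -> : #|S| = (2 ^ k).*2 + (#|S| - (2 ^ k).*2) by lia.
  by rewrite xor_coef_top //; lia.
have [T hT] := exists_set_of_card low.
by rewrite -hT; apply: deg_lb; rewrite coefE hT xor_coef_upper_half ?eqxx //; lia.
Qed.

Theorem theorem5 (m n : nat) (f : BF n) :
  2 <= m -> 2 ^ m <= n -> n < 2 ^ m + 2 ^ (m - 1) - 1 ->
  symmetricBF f ->
  AI f <= 2 ^ (m - 1) - 1 \/
  deg (bmul (sigma n (n - 2 ^ m + 1)) f) = 2 ^ (m - 1) + (n - 2 ^ m + 1).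
Proof.
move=> m2 lo hi /symmetric_weight [V fV].
have double_h : 2 ^ m = (2 ^ (m - 1)).*2.
  by rewrite -muln2 -expnSr subn1 prednK // ltnW.
rewrite double_h in lo hi *; set h := 2 ^ (m - 1) in lo hi *.
set e := n - h.*2 + 1.
have eh : e < h by lia.
case: (boolP [exists r : 'I_h, (e <= r) && (V r == V (r + h))]).
  move=> /existsP [r /andP [er /eqP Vr]]; left.
  have rh := ltn_ord r.
  by apply: (AI_le_of_equal_pair fV _ _ _ Vr); lia.
move=> /existsPn noPair; right; apply: (deg_sigma_mul fV) => //; try lia.
move=> d /andP [ed dh]; have := noPair (Ordinal dh).
by rewrite /= ed addnC.
Qed.
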